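(* Let $\mathbf A,\mathbf B$ be $\tau$-algebras. Then $\mathbf B\in\mathbb{HSP}(\mathbf A)$ if and only if the map $\varepsilon:\mathbf A^\uparrow\to\mathbf B^\uparrow$, $\varepsilon(t^{\mathbf A})=t^{\mathbf B}$ ($t$ a $\tau$-term over $V$), is a well-defined homomorphism of infinitary clone $\tau$-algebras.
   Context: $\tau$ is a set of $\omega$-ary operation symbols disjoint from $\{q\}\cup\{e_i:i\in\omega\}$; a $\tau$-algebra has operations $A^\omega\to A$. $\tau$-terms over $V=\{e_0,e_1,\dots\}$ are well-founded countably branching terms built by $f(t_0,t_1,\dots)$; term operations: $e_i^{\mathbf A}(s)=s_i$, $f(t_0,t_1,\dots)^{\mathbf A}(s)=f^{\mathbf A}(t_0^{\mathbf A}(s),t_1^{\mathbf A}(s),\dots)$. $\mathbb{HSP}(\mathbf A)$ is the class of algebras isomorphic to homomorphic images of subalgebras of arbitrary direct powers of $\mathbf A$. An infinitary clone $\tau$-algebra is an algebra with constants $e_i$ ($i\in\omega$), a constant $f$ for each $f\in\tau$, and an $\omega$-ary $q$ satisfying (N1) $q(e_i,x_0,x_1,\dots)=x_i$; (N2) $q(x,e_0,e_1,\dots)=x$; (N3) $q(q(x,y_0,y_1,\dots),\boldsymbol z)=q(x,q(y_0,\boldsymbol z),q(y_1,\boldsymbol z),\dots)$. $\mathbf A^\uparrow$ is the set $\{t^{\mathbf A}\}$ of term operations with $e_i(s)=s_i$, $q(g_0,g_1,\dots)(s)=g_0(g_1(s),g_2(s),\dots)$ and $f\mapsto f^{\mathbf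 A}$. *)

Set Implicit Arguments.

Record algebra (tau : Type) := Algebra {
  carrier :> Type;
  op : tau -> (nat -> carrier) -> carrier }.
Arguments op {tau} a f s.

(* tau-terms over V = {e_0, e_1, ...}: well-founded countably branching trees. *)
Inductive term (tau : Type) : Type :=
| e : nat -> term tau
| app : tau -> (nat -> term tau) -> term tau.
Arguments e {tau} i.

Fixpoint term_op (tau : Type) (A : algebra tau) (t : term tau) (s : nat -> A) : A :=
  match t with
  | e i => s i
  | app f ts => op A f (fun i => term_op A (ts i) s)
  end.

Definition is_hom {tau : Type} (A B : algebra tau) (h : A -> B) : Prop :=
  forall (f : tau) (s : nat -> A), h (op A f s) = op B f (fun i => h (s i)).

Definition surjective (X Y : Type) (h : X -> Y) : Prop := forall y, exists x, h x = y.

Definition is_iso {tau : Type} (A B : algebra tau) (h : A -> B) : Prop :=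
  is_hom A B h /\ exists g : B -> A, (forall x, g (h x) = x) /\ (forall y, h (g y) = y).

Definition power (tau : Type) (A : algebra tau) (I : Type) : algebra tau :=
  @Algebra tau (I -> A) (fun f s k => op A f (fun n => s n k)).

Definition closed (tau : Type) (A : algebra tau) (S : A -> Prop) : Prop :=
  forall (f : tau) (s : nat -> A), (forall n, S (s n)) -> S (op A f s).

Definition subalg (tau : Type) (A : algebra tau) (S : A -> Prop) (HS : closed A S)
  : algebra tau :=
  @Algebra tau {x : A | S x}
    (fun f s => exist S (op A f (fun n => proj1_sig (s n)))
                  (HS f _ (fun n => proj2_sig (s n)))).

Definition HSP (tau : Type) (A B : algebra tau) : Prop :=
  exists (I : Type) (S : power A I -> Prop) (HS : closed (power A I) S)
         (C : algebra tau) (h : subalg HS -> C) (k : C -> B),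
    is_hom _ _ h /\ surjective h /\ is_iso _ _ k.

(* The clone tau-algebra operations on the set of all omega-ary operations
   (nat -> A) -> A; A^up is the subset of term operations. *)
Definition up_e (tau : Type) (A : algebra tau) (i : nat) : (nat -> A) -> A :=
  fun s => s i.
Definition up_f (tau : Type) (A : algebra tau) (f : tau) : (nat -> A) -> A :=
  fun s => op A f s.
Definition up_q {tau : Type} (A : algebra tau)
  (g0 : (nat -> A) -> A) (g : nat -> (nat -> A) -> A) : (nat -> A) -> A :=
  fun s => g0 (fun i => g i s).

Definition in_up (tau : Type) (A : algebra tau) (g : (nat -> A) -> A) : Prop :=
  exists t : term tau, g = term_op A t.

(* h restricted to A^up is a homomorphism of infinitary clone tau-algebras
   A^up -> B^up: it preserves the constants e_i, the constants f, and q. *)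
Definition up_hom (tau : Type) (A B : algebra tau)
  (h : ((nat -> A) -> A) -> ((nat -> B) -> B)) : Prop :=
  (forall i, h (up_e A i) = up_e B i) /\
  (forall f, h (up_f A f) = up_f B f) /\
  (forall g0 g, in_up A g0 -> (forall i, in_up A (g i)) ->
     h (up_q A g0 g) = up_q B (h g0) (fun i => h (g i))).

From Stdlib Require Import FunctionalExtensionality ProofIrrelevance ClassicalEpsilon Cantor.
Set Implicit Arguments.

(* Both sides say that every identity t1 = t2 valid in A is valid in B.  The
   operators H, S and P preserve identities.  Conversely, if B satisfies the
   identities of A, then B is the image of the subalgebra of A^(B -> A)
   generated by the projections k |-> k b under the map sending
   k |-> t^A(k b_0, k b_1, ...) to t^B(b_0, b_1, ...).  Finally, t^A |-> t^B
   is well defined exactly when identities transfer, and it then preserves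
   e_i, f and q because q acts on term operations as substitution of terms. *)

Section Terms.
Context {tau : Type}.

Fixpoint subst (t : term tau) (sg : nat -> term tau) : term tau :=
  match t with
  | e i => sg i
  | app f ts => app f (fun n => subst (ts n) sg)
  end.

Lemma term_op_subst (X : algebra tau) t sg s :
  term_op X (subst t sg) s = term_op X t (fun i => term_op X (sg i) s).
Proof.
  induction t as [i | f ts IH]; simpl; auto.
  f_equal. apply functional_extensionality; intro n; apply IH.
Qed.

Definition rename (t : term tau) (r : nat -> nat) : term tau :=
  subst t (fun i => e (r i)).

Lemma term_op_rename (X : algebra tau) t r s :
  term_op X (rename t r) s = term_op X t (fun i => s (r i)).
Proof. unfold rename; rewrite term_op_subst; reflexivity. Qed.

(* Countably many parameter tuples [bs n] are packed into one tuple through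
   the Cantor pairing; [shift_term t n] reads its variables from block [n]. *)
Definition merge_params {Z : Type} (bs : nat -> nat -> Z) (j : nat) : Z :=
  let (n, m) := of_nat j in bs n m.

Definition shift_term (t : term tau) (n : nat) : term tau :=
  rename t (fun m => to_nat (n, m)).

Lemma term_op_shift (X : algebra tau) (Z : Type) t n (bs : nat -> nat -> Z) (k : Z -> X) :
  term_op X (shift_term t n) (fun j => k (merge_params bs j)) =
  term_op X t (fun m => k (bs n m)).
Proof.
  unfold shift_term; rewrite term_op_rename.
  f_equal; apply functional_extensionality; intro m.
  unfold merge_params; rewrite cancel_of_to; reflexivity.
Qed.

Definition app_merge (f : tau) (ts : nat -> term tau) : term tau :=
  app f (fun n => shift_term (ts n) n).

Lemma term_op_app_merge (X : algebra tau) (Z : Type) f ts (bs : nat -> nat -> Z) (k : Z -> X) :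
  term_op X (app_merge f ts) (fun j => k (merge_params bs j)) =
  op X f (fun n => term_op X (ts n) (fun m => k (bs n m))).
Proof.
  simpl. f_equal; apply functional_extensionality; intro n.
  apply term_op_shift.
Qed.

Lemma up_q_term_op (X : algebra tau) t0 ts :
  up_q X (term_op X t0) (fun i => term_op X (ts i)) = term_op X (subst t0 ts).
Proof.
  apply functional_extensionality; intro s.
  unfold up_q; rewrite term_op_subst; reflexivity.
Qed.

Lemma term_op_power (A : algebra tau) (I : Type) t (s : nat -> power A I) :
  term_op (power A I) t s = fun k => term_op A t (fun n => s n k).
Proof.
  induction t as [i | f ts IH]; simpl; auto.
  apply functional_extensionality; intro k. f_equal.
  apply functional_extensionality; intro n. rewrite IH. reflexivity.
Qed.

Lemma term_op_subalg (X : algebra tau) S (HS : closed X S) t (s : nat -> subalg HS) :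
  proj1_sig (term_op (subalg HS) t s) = term_op X t (fun n => proj1_sig (s n)).
Proof.
  induction t as [i | f ts IH]; simpl; auto.
  f_equal. apply functional_extensionality; intro n. apply IH.
Qed.

Lemma term_op_hom (C D : algebra tau) h (Hh : is_hom C D h) t s :
  h (term_op C t s) = term_op D t (fun n => h (s n)).
Proof.
  induction t as [i | f ts IH]; simpl; auto.
  rewrite Hh. f_equal. apply functional_extensionality; intro n. apply IH.
Qed.

Definition identities_hold_in (A B : algebra tau) : Prop :=
  forall t1 t2 : term tau, term_op A t1 = term_op A t2 -> term_op B t1 = term_op B t2.

End Terms.

Section HSPIdentities.
Context {tau : Type} (A : algebra tau).

Lemma identities_hold_in_power (I : Type) : identities_hold_in A (power A I).
Proof.
  intros t1 t2 E. apply functional_extensionality; intro s.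
  rewrite !term_op_power, E. reflexivity.
Qed.

Lemma identities_hold_in_subalg (X : algebra tau) S (HS : closed X S) :
  identities_hold_in A X -> identities_hold_in A (subalg HS).
Proof.
  intros HX t1 t2 E. apply functional_extensionality; intro s.
  apply eq_sig_hprop; [intros; apply proof_irrelevance |].
  rewrite !term_op_subalg, (HX _ _ E). reflexivity.
Qed.

Lemma identities_hold_in_hom_image (C D : algebra tau) h :
  identities_hold_in A C -> is_hom C D h -> surjective h -> identities_hold_in A D.
Proof.
  intros HC Hh Hsurj t1 t2 E. apply functional_extensionality; intro s.
  destruct (choice (fun n x => h x = s n) (fun n => Hsurj (s n))) as [s' Hs'].
  replace s with (fun n => h (s' n)) by (apply functional_extensionality; exact Hs').
  rewrite <- !(term_op_hom Hh), (HC _ _ E). reflexivity.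
Qed.

Lemma HSP_identities (B : algebra tau) : HSP A B -> identities_hold_in A B.
Proof.
  intros (I & S & HS & C & h & k & Hh & Hsurj & Hk & g & _ & Hkg).
  apply (identities_hold_in_hom_image (h := k)); [| exact Hk | intro y; exists (g y); apply Hkg].
  apply (identities_hold_in_hom_image (h := h)); auto.
  apply identities_hold_in_subalg, identities_hold_in_power.
Qed.

End HSPIdentities.

Section IdentitiesHSP.
Context {tau : Type} (A B : algebra tau).
Hypothesis HAB : identities_hold_in A B.

(* Choosing an index [r b] for each value [b] of [g] turns the hypothesis,
   which only concerns assignments factoring through [g], into a genuine
   identity of A between the renamed terms. *)
Lemma term_op_eq_of_assignments t1 t2 (g : nat -> B) :
  (forall k : B -> A,
     term_op A t1 (fun n => k (g n)) = term_op A t2 (fun n => k (g n))) ->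
  term_op B t1 g = term_op B t2 g.
Proof.
  intro Hk.
  set (r := fun b => epsilon (inhabits 0) (fun j => g j = b)).
  assert (Hr : forall n, g (r (g n)) = g n)
    by (intro n; apply (epsilon_spec (inhabits 0) (fun j => g j = g n)); exists n; reflexivity).
  assert (HA : term_op A (rename t1 (fun n => r (g n))) = term_op A (rename t2 (fun n => r (g n)))).
  { apply functional_extensionality; intro s.
    rewrite !term_op_rename. exact (Hk (fun b => s (r b))). }
  pose proof (equal_f (HAB _ _ HA) g) as HB.
  rewrite !term_op_rename in HB.
  replace (fun i => g (r (g i))) with g in HB
    by (apply functional_extensionality; intro i; symmetry; apply Hr).
  exact HB.
Qed.

Lemma term_op_eq_of_parametrized_assignments t1 t2 (b1 b2 : nat -> B) :
  (forall k : B -> A,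
     term_op A t1 (fun n => k (b1 n)) = term_op A t2 (fun n => k (b2 n))) ->
  term_op B t1 b1 = term_op B t2 b2.
Proof.
  intro Hk.
  set (bs := fun n => match n with 0 => b1 | _ => b2 end).
  assert (E1 : term_op B t1 b1 = term_op B (shift_term t1 0) (merge_params bs))
    by (symmetry; exact (term_op_shift B t1 0 bs (fun b => b))).
  assert (E2 : term_op B t2 b2 = term_op B (shift_term t2 1) (merge_params bs))
    by (symmetry; exact (term_op_shift B t2 1 bs (fun b => b))).
  rewrite E1, E2.
  apply term_op_eq_of_assignments; intro k.
  rewrite !term_op_shift. apply Hk.
Qed.

End IdentitiesHSP.

Section ProjectionGenerated.
Context {tau : Type} (A B : algebra tau).

Definition projection_generated (x : power A (B -> A)) : Prop :=
  exists tb : term tau * (nat -> B),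
    x = fun k => term_op A (fst tb) (fun n => k (snd tb n)).

Lemma projection_generated_closed : closed (power A (B -> A)) projection_generated.
Proof.
  intros f s Hs.
  destruct (choice _ Hs) as [tbs Htbs].
  exists (app_merge f (fun n => fst (tbs n)), merge_params (fun n => snd (tbs n))).
  apply functional_extensionality; intro k; simpl fst; simpl snd.
  rewrite term_op_app_merge. simpl. f_equal.
  apply functional_extensionality; intro n. rewrite (Htbs n). reflexivity.
Qed.

Let F := subalg projection_generated_closed.

Definition representation (x : F) : term tau * (nat -> B) :=
  proj1_sig (constructive_indefinite_description _ (proj2_sig x)).

Lemma representationP (x : F) :
  proj1_sig x = fun k => term_op A (fst (representation x)) (fun n => k (snd (representation x) n)).
Proof. exact (proj2_sig (constructive_indefinite_description _ (proj2_sig x))). Qed.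

Definition eval_representation (x : F) : B :=
  term_op B (fst (representation x)) (snd (representation x)).

Hypothesis HAB : identities_hold_in A B.

Lemma eval_representation_eq (x : F) t b :
  proj1_sig x = (fun k => term_op A t (fun n => k (b n))) ->
  eval_representation x = term_op B t b.
Proof.
  intro Hx. apply (term_op_eq_of_parametrized_assignments HAB); intro k.
  rewrite <- (equal_f Hx k). symmetry; exact (equal_f (representationP x) k).
Qed.

Lemma eval_representation_hom : is_hom F B eval_representation.
Proof.
  intros f s.
  set (ts := fun n => fst (representation (s n))).
  set (bs := fun n => snd (representation (s n))).
  rewrite (eval_representation_eq _ (app_merge f ts) (merge_params bs)).
  - exact (term_op_app_merge B f ts bs (fun b => b)).
  - apply functional_extensionality; intro k.
    rewrite term_op_app_merge. simpl. f_equal.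
    apply functional_extensionality; intro n. exact (equal_f (representationP (s n)) k).
Qed.

Lemma eval_representation_surjective : surjective eval_representation.
Proof.
  intro y.
  assert (Hy : projection_generated (fun k => k y)) by (exists (e 0, fun _ => y); reflexivity).
  exists (exist _ _ Hy).
  exact (eval_representation_eq (exist _ _ Hy) (e 0) (fun _ => y) eq_refl).
Qed.

End ProjectionGenerated.

Lemma identities_HSP {tau : Type} (A B : algebra tau) : identities_hold_in A B -> HSP A B.
Proof.
  intro HAB.
  exists (B -> A), (@projection_generated _ A B), (@projection_generated_closed _ A B), B,
    (@eval_representation _ A B), (fun b => b).
  split; [| split].
  - exact (eval_representation_hom HAB).
  - exact (eval_representation_surjective HAB).
  - split; [intros f s; reflexivity | exists (fun b => b); split; reflexivity].
Qed.

Section TermTransfer.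
Context {tau : Type} {A B : algebra tau}.

Lemma identities_term_transfer {eps : ((nat -> A) -> A) -> ((nat -> B) -> B)} :
  (forall t, eps (term_op A t) = term_op B t) -> identities_hold_in A B.
Proof. intros Heps t1 t2 E. rewrite <- !Heps, E. reflexivity. Qed.

Lemma term_transfer_identities :
  identities_hold_in A B ->
  exists eps : ((nat -> A) -> A) -> ((nat -> B) -> B),
    forall t, eps (term_op A t) = term_op B t.
Proof.
  intro HAB.
  exists (fun g => term_op B (epsilon (inhabits (e 0)) (fun t => g = term_op A t))).
  intro t. apply HAB. symmetry.
  apply (epsilon_spec (inhabits (e 0)) (fun t' => term_op A t = term_op A t')).
  exists t; reflexivity.
Qed.

Lemma up_hom_term_transfer {eps : ((nat -> A) -> A) -> ((nat -> B) -> B)} :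
  (forall t, eps (term_op A t) = term_op B t) -> up_hom A B eps.
Proof.
  intro Heps. split; [| split].
  - intro i. exact (Heps (e i)).
  - intro f. exact (Heps (app f e)).
  - intros g0 g [t0 ->] Hg.
    destruct (choice _ Hg) as [ts Hts].
    replace g with (fun i => term_op A (ts i)) by (apply functional_extensionality; intro i; symmetry; apply Hts).
    rewrite up_q_term_op, Heps, <- up_q_term_op, Heps.
    f_equal. apply functional_extensionality; intro i. symmetry; apply Heps.
Qed.

End TermTransfer.

Theorem proposition8p1 (tau : Type) (A B : algebra tau) :
  HSP A B <->
  exists eps : ((nat -> A) -> A) -> ((nat -> B) -> B),
    (forall t : term tau, eps (term_op A t) = term_op B t) /\ up_hom A B eps.
Proof.
  split.
  - intro HSP_AB.
    destruct (term_transfer_identities (HSP_identities HSP_AB)) as [eps Heps].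
    exists eps. split; [exact Heps | exact (up_hom_term_transfer Heps)].
  - intros (eps & Heps & _).
    exact (identities_HSP (identities_term_transfer Heps)).
Qed.
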